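(* Let $\hat k\in K$, $\hat j\in M\cup\{0\}$, and let $\bar{\boldsymbol{\pi}}$ be an extreme point of $\mathcal{C}_{(\hat k,\hat j)}=\{\boldsymbol{\pi}\in\mathcal{C}:\alpha^{\hat j}_{\hat k}=1\}$. For $j\in M\cup\{0\}$ define $\mathcal{K}^j=\{k\in K:\bar\alpha^j_k>0\}\setminus\{\hat k\}$ if $j=\hat j$ and $\mathcal{K}^j=\{k\in K:\bar\alpha^j_k>0\}$ otherwise, and $\mathcal{T}^j=\{t\in T:\bar\beta^j_t>0\}$. Write $\Phi_{i,j}=\Phi_{i,j}(\bar{\boldsymbol{\pi}})$, $\Psi_j=\Psi_j(\bar{\boldsymbol{\pi}})$. Then: (a) $\bigcap_{j=0}^m\mathcal{T}^j=\emptyset$; (b) for each $i\in N$, $\bar\gamma^0_i=\max_{j\in M}(\Phi_{i,j})^+$, and $\bar\gamma^j_i=\bar\gamma^0_i-\Phi_{i,j}$ for all $j\in M$; (c) $\bar\theta_0=\max_{j\in M}(\Psi_j)^+$, and $\bar\theta_j=\bar\theta_0-\Psi_j$ for all $j\in M$; (d) there exist $U_1\subseteq\{(i,j)\in N\times M:\Phi_{i,j}=0\}$ and $U_2\subseteq\{j\in M:\Psi_j=0\}$ such that $$|U_1|+|U_2|\ \ge\ \sum_{j=0}^m\big(|\mathcal{K}^j|+|\mathcal{T}^j|\big)+\sum_{i=1}^n\mathbb{I}(\bar\gamma^0_i)-\sum_{i=1}^n\sum_{j=1}^m\mathbb{I}(\bar\gamma^0_i)\big(1-\mathbb{I}(\bar\gamma^j_i)\big)+\mathbb{I}(\bar\theta_0)-\sum_{j=1}^m\mathbb{I}(\bar\theta_0)\big(1-\mathbb{I}(\bar\theta_j)\big).$$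 Conversely, if $\bar{\boldsymbol{\pi}}$ has nonnegative $\bar{\boldsymbol{\alpha}}^j,\bar{\boldsymbol{\beta}}^j$ components, $\bar\alpha^{\hat j}_{\hat k}=1$, and its $\bar{\boldsymbol{\gamma}},\bar{\boldsymbol{\theta}}$ components are given by the formulas in (b) and (c), then $\bar{\boldsymbol{\pi}}\in\mathcal{C}_{(\hat k,\hat j)}$.
   Context: Let $N=\{1,\dots,n\}$, $M=\{1,\dots,m\}$, $K=\{1,\dots,\kappa\}$, $T=\{1,\dots,\tau\}$, with data $A^k\in\mathbb{R}^{m\times n}$ (entries $A^k_{j,i}$), $\mathbf{b}^k\in\mathbb{R}^n$, $\mathbf{c}^k\in\mathbb{R}^m$ (entries $c^k_j$), $d_k\in\mathbb{R}$ ($k\in K$), $E\in\mathbb{R}^{\tau\times n}$, $\mathbf{f}\in\mathbb{R}^\tau$. Vectors $\boldsymbol{\pi}=(\boldsymbol{\alpha}^0,\dots,\boldsymbol{\alpha}^m;\boldsymbol{\beta}^0,\dots,\boldsymbol{\beta}^m;\boldsymbol{\gamma}^0,\dots,\boldsymbol{\gamma}^m;\theta_0,\dots,\theta_m)\in\mathbb{R}^{(m+1)(\kappa+\tau+n+1)}$ with $\boldsymbol{\alpha}^j\in\mathbb{R}^\kappa$, $\boldsymbol{\beta}^j\in\mathbb{R}^\tau$, $\boldsymbol{\gamma}^j\in\mathbb{R}^n$, $\theta_j\in\mathbb{R}$. Define $\Phi_{i,j}(\boldsymbol{\pi})=\sum_{k=1}^\kappa\big((A^k_{j,i}+b^k_i)\alpha^j_k-b^k_i\alpha^0_k\big)+\sum_{t=1}^\tau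 E_{t,i}(\beta^j_t-\beta^0_t)$ for $i\in N,j\in M$, and $\Psi_j(\boldsymbol{\pi})=\sum_{k=1}^\kappa\big((c^k_j-d_k)\alpha^j_k+d_k\alpha^0_k\big)+\sum_{t=1}^\tau f_t(\beta^0_t-\beta^j_t)$ for $j\in M$. $\mathcal{C}$ is the set of all $\boldsymbol{\pi}\ge\mathbf{0}$ with $\Phi_{i,j}(\boldsymbol{\pi})+\gamma^j_i-\gamma^0_i=0$ for all $i\in N,j\in M$ and $\Psi_j(\boldsymbol{\pi})+\theta_j-\theta_0=0$ for all $j\in M$. $(a)^+=\max\{a,0\}$; $\mathbb{I}(a)=0$ if $a=0$ and $\mathbb{I}(a)=1$ otherwise. *)

From HB Require Import structures.
From mathcomp Require Import all_boot all_order all_algebra.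
Set Implicit Arguments. Unset Strict Implicit. Unset Printing Implicit Defensive.
Import Order.TTheory GRing.Theory Num.Theory.
Local Open Scope ring_scope.

(* Coordinates of pi = (alpha^0..alpha^m; beta^0..beta^m; gamma^0..gamma^m; theta_0..theta_m).
   Index j : 'I_m.+1 stands for j in M u {0} (ord0 = 0); an element j : 'I_m of M
   = {1..m} is embedded as jM j = lift ord0 j (i.e. value j+1). *)
Inductive coord (m kappa tau n : nat) : Type :=
| CA of 'I_m.+1 & 'I_kappa
| CB of 'I_m.+1 & 'I_tau
| CG of 'I_m.+1 & 'I_n
| CT of 'I_m.+1.
Arguments CA {m kappa tau n}.
Arguments CB {m kappa tau n}.
Arguments CG {m kappa tau n}.
Arguments CT {m kappa tau n}.

Section Defs.
Variables (R : realFieldType) (n m kappa tau : nat).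
Variables (A : 'I_kappa -> 'M[R]_(m, n)) (b : 'I_kappa -> 'rV[R]_n)
          (c : 'I_kappa -> 'rV[R]_m) (d : 'rV[R]_kappa)
          (E : 'M[R]_(tau, n)) (f : 'cV[R]_tau).

Definition pivec := coord m kappa tau n -> R.

Definition jM (j : 'I_m) : 'I_m.+1 := lift ord0 j.

Definition al (p : pivec) j k := p (CA j k).
Definition be (p : pivec) j t := p (CB j t).
Definition ga (p : pivec) j i := p (CG j i).
Definition th (p : pivec) j := p (CT j).

Definition Phi (p : pivec) (i : 'I_n) (j : 'I_m) : R :=
  \sum_(k < kappa) ((A k j i + b k ord0 i) * al p (jM j) k - b k ord0 i * al p ord0 k)
  + \sum_(t < tau) E t i * (be p (jM j) t - be p ord0 t).

Definition Psi (p : pivec) (j : 'I_m) : R :=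
  \sum_(k < kappa) ((c k ord0 j - d ord0 k) * al p (jM j) k + d ord0 k * al p ord0 k)
  + \sum_(t < tau) f t ord0 * (be p ord0 t - be p (jM j) t).

Definition inC (p : pivec) : Prop :=
  (forall x, 0 <= p x)
  /\ (forall i j, Phi p i j + ga p (jM j) i - ga p ord0 i = 0)
  /\ (forall j, Psi p j + th p (jM j) - th p ord0 = 0).

Definition inCkj (kh : 'I_kappa) (jh : 'I_m.+1) (p : pivec) : Prop :=
  inC p /\ al p jh kh = 1.

End Defs.

Definition extreme_point (R : realFieldType) (X : Type) (S : (X -> R) -> Prop)
    (p : X -> R) : Prop :=
  S p /\
  forall (x y : X -> R) (l : R), S x -> S y -> 0 < l < 1 ->
    (forall z, p z = l * x z + (1 - l) * y z) -> x = y.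

Definition pos_part (R : realFieldType) (a : R) : R := Num.max a 0.
Definition Ind (R : realFieldType) (a : R) : int := if a == 0 then 0 else 1.

(* C_(kh,jh) is the polyhedron {p >= 0 : L p = r} cut out by the n m + m
   equations of C and the normalisation alpha^jh_kh = 1.  If a nonzero
   direction dl in ker L vanished off the support of an extreme point pb, both
   pb + e dl and pb - e dl would be feasible for small e > 0, which is
   impossible; by rank-nullity the support of pb therefore has at most
   n m + m + 1 elements.  Counting it block by block, and removing the pairs
   (i, j) where gamma^0_i and gamma^j_i both vanish, gives (d).
   Raising gamma^j_i by the same amount for every j changes no equation, so
   this direction must leave the support: some gamma^j_i is 0, which forces
   gamma^0_i = max_j (Phi_ij)^+.  The same argument for theta gives (c), and
   for beta_t (when beta^j_t > 0 for all j) gives (a). *)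

From Pilot Require Import Defs.
From HB Require Import structures.
From mathcomp Require Import all_boot all_order all_algebra.
From mathcomp Require Import ring lra.
From Stdlib Require Import FunctionalExtensionality.
Import Order.TTheory GRing.Theory Num.Theory.
Set Implicit Arguments. Unset Strict Implicit. Unset Printing Implicit Defensive.
Local Open Scope ring_scope.

Section LinearKernel.
Variables (F : fieldType) (X Q : finType) (L : (X -> F) -> Q -> F).
Hypothesis L_linear :
  forall x y a q, L (fun z => x z + a * y z) q = L x q + a * L y q.

Lemma linear_sum (I : Type) (r : seq I) (u : I -> F) (e : I -> X -> F) q :
  L (fun z => \sum_(i <- r) u i * e i z) q = \sum_(i <- r) u i * L (e i) q.
Proof.
have L0 : L (fun _ => 0) q = 0.
  have := L_linear (fun _ => 0) (fun _ => 0) 1 q.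
  have -> : (fun _ : X => 0 + 1 * 0) = (fun _ => 0 :> F).
    by apply: functional_extensionality => z; rewrite mulr0 addr0.
  rewrite mul1r => L0_double.
  by apply: (@addrI _ (L (fun _ => 0) q)); rewrite addr0 -L0_double.
elim: r => [|i r IHr].
  rewrite big_nil -[RHS]L0; congr (L _ q).
  by apply: functional_extensionality => z; rewrite big_nil.
rewrite big_cons -IHr addrC -L_linear; congr (L _ q).
by apply: functional_extensionality => z; rewrite big_cons addrC.
Qed.

Lemma kernel_in_support (D : {set X}) : (#|Q| < #|D|)%N ->
  exists x : X -> F, [/\ exists z, x z != 0,
    forall z, z \notin D -> x z = 0 & forall q, L x q = 0].
Proof.
move=> ltQD.
pose e (r : 'I_#|D|) (z : X) : F := (z == enum_val r)%:R.
pose M : 'M[F]_(#|D|, #|Q|) := \matrix_(r, q) L (e r) (enum_val q).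
have /rowV0Pn [w /sub_kermxP wM0 /rV0Pn [r' wr'_neq0]] : kermx M != 0.
  rewrite -mxrank_eq0 mxrank_ker subn_eq0 -ltnNge.
  exact: leq_ltn_trans (rank_leq_col M) ltQD.
exists (fun z => \sum_r w 0 r * e r z); split.
- exists (enum_val r'); rewrite (bigD1 r') //= big1 ?addr0 /e ?eqxx ?mulr1 //.
  by move=> r ne_r; rewrite (inj_eq enum_val_inj) eq_sym (negbTE ne_r) mulr0.
- move=> z zD; apply: big1 => r _; rewrite /e.
  by case: eqP => [zr|]; [move: zD; rewrite zr enum_valP | rewrite mulr0].
- move=> q; rewrite linear_sum -(enum_rankK q).
  move/rowP: wM0 => /(_ (enum_rank q)); rewrite !mxE => wMq; rewrite -[RHS]wMq.
  by apply: eq_bigr => r _; rewrite [M _ _]mxE.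
Qed.

End LinearKernel.

Lemma extreme_point_equiv (R : realFieldType) (X : Type) (S S' : (X -> R) -> Prop) p :
  (forall x, S x <-> S' x) -> extreme_point S p -> extreme_point S' p.
Proof.
move=> SS' [Sp p_extreme]; split=> [|x y l S'x S'y]; first exact/SS'.
by apply: p_extreme; apply/SS'.
Qed.

Section Polyhedron.
Variables (R : realFieldType) (X Q : finType) (L : (X -> R) -> Q -> R) (r : Q -> R).
Hypothesis L_linear :
  forall x y a q, L (fun z => x z + a * y z) q = L x q + a * L y q.

Definition polyhedron (p : X -> R) : Prop := (forall z, 0 <= p z) /\ forall q, L p q = r q.

Lemma exists_feasible_step (p dl : X -> R) : (forall z, 0 <= p z) ->
  (forall z, p z = 0 -> dl z = 0) -> exists2 e : R, 0 < e & forall z, e * `|dl z| <= p z.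
Proof.
move=> p_ge0 dl_supp.
set e := \big[Num.min/1]_(z | p z != 0) (p z / (`|dl z| + 1)).
have dl1_gt0 z : 0 < `|dl z| + 1 by rewrite ltr_wpDl.
have e_gt0 : 0 < e.
  apply/bigmin_gtP; split=> // z pz_neq0.
  by rewrite divr_gt0 // lt0r pz_neq0 p_ge0.
exists e => // z; have [pz0|pz_neq0] := eqVneq (p z) 0.
  by rewrite dl_supp // normr0 mulr0 pz0.
have : e <= p z / (`|dl z| + 1) by exact: bigmin_le_cond.
rewrite ler_pdivlMr // => /(le_trans _); apply.
by rewrite ler_pM2l // lerDl.
Qed.

Lemma extreme_point_no_direction p : extreme_point polyhedron p ->
  forall dl, (forall z, p z = 0 -> dl z = 0) -> (forall q, L dl q = 0) ->
  forall z, dl z = 0.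
Proof.
move=> [[p_ge0 Lp] p_extreme] dl dl_supp Ldl.
have [e e_gt0 e_dl] := exists_feasible_step p_ge0 dl_supp.
have shift_in (a : R) : `|a| <= e -> polyhedron (fun z => p z + a * dl z).
  move=> a_le; split=> [z|q]; last by rewrite L_linear Lp Ldl mulr0 addr0.
  have : `|a * dl z| <= p z by rewrite (le_trans _ (e_dl z)) // normrM ler_wpM2r.
  by rewrite ler_norml => /andP [lo _]; lra.
have e_norm : `|e| <= e by rewrite ger0_norm // ltW.
have shifts_eq : (fun z => p z + e * dl z) = (fun z => p z + - e * dl z).
  apply: (p_extreme _ _ (1 / 2) (shift_in e e_norm) (shift_in (- e) _)).
  - by rewrite normrN.
  - by apply/andP; split; lra.
  - by move=> z; field.
move=> z; have /(congr1 (fun g => g z)) /= := shifts_eq.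
rewrite mulNr => /addrI edl_eq; have /eqP : e * dl z = 0 by lra.
by rewrite mulf_eq0 (gt_eqF e_gt0) => /eqP.
Qed.

Lemma extreme_point_support_card p : extreme_point polyhedron p ->
  (#|[set z | p z != 0%R]| <= #|Q|)%N.
Proof.
move=> p_extreme; rewrite leqNgt; apply/negP.
move=> /(kernel_in_support L_linear) [x [[z /eqP xz_neq0] x_supp Lx]].
apply: xz_neq0; apply: (extreme_point_no_direction p_extreme) => // z' pz'0.
by apply: x_supp; rewrite inE pz'0 eqxx.
Qed.

End Polyhedron.

Section Columns.
Variables (R : realFieldType) (m : nat) (g : 'I_m.+1 -> R) (u : 'I_m -> R).
Hypothesis gE : forall j, g (jM j) = g ord0 - u j.

Lemma column_ge0 : g ord0 = \big[Num.max/0]_(j < m) pos_part (u j) ->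
  forall j, 0 <= g j.
Proof.
move=> g0E j; case: (unliftP ord0 j) => [j'|] ->; last by rewrite g0E bigmax_ge_id.
rewrite -/(jM j') gE subr_ge0 g0E; apply: (bigmax_sup j') => //.
by rewrite /pos_part le_max lexx.
Qed.

Lemma column_bigmax_pos_part : (forall j, 0 <= g j) -> ~ (forall j, 0 < g j) ->
  g ord0 = \big[Num.max/0]_(j < m) pos_part (u j).
Proof.
move=> g_ge0 g_not_pos; apply/eqP; rewrite eq_le; apply/andP; split; last first.
  apply/bigmax_leP; split=> [|j _]; first exact: g_ge0.
  by rewrite /pos_part ge_max g_ge0 andbT -subr_ge0 -gE.
rewrite leNgt; apply/negP => /bigmax_ltP [g0_gt0 u_lt]; apply: g_not_pos => j.
case: (unliftP ord0 j) => [j'|] -> //; rewrite -/(jM j') gE subr_gt0.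
by have := u_lt j' isT; rewrite /pos_part gt_max => /andP [].
Qed.

End Columns.

Section Counting.
Variables (R : realFieldType) (I : finType).

Lemma sum_Ind (u : I -> R) : \sum_x Ind (u x) = #|[set x | u x != 0]|%:Z.
Proof.
rewrite -sum1_card (big_morph Posz PoszD (erefl _)) [RHS]big_mkcond /=.
by apply: eq_bigr => x _; rewrite inE /Ind; case: (u x == 0).
Qed.

Lemma card_both_zero (u v : I -> R) :
  #|[set x | (u x == 0) && (v x == 0)]|%:Z
  = #|I|%:Z - \sum_x Ind (v x) - \sum_x Ind (u x) * (1 - Ind (v x)).
Proof.
have -> : #|I|%:Z = \sum_(x : I) 1 by rewrite sumr_const natz.
rewrite -!sumrB -sum1_card (big_morph Posz PoszD (erefl _)) [LHS]big_mkcond /=.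
by apply: eq_bigr => x _; rewrite inE /Ind; case: (u x == 0); case: (v x == 0).
Qed.

End Counting.

Section CoordFinite.
Variables (m kappa tau n : nat).

(* The qualification is needed: [coord] alone is the coordinate map of vector.v. *)

Definition coord_repr (z : Defs.coord m kappa tau n) :
    ('I_m.+1 * 'I_kappa + 'I_m.+1 * 'I_tau) + ('I_m.+1 * 'I_n + 'I_m.+1) :=
  match z with
  | CA j k => inl (inl (j, k))
  | CB j t => inl (inr (j, t))
  | CG j i => inr (inl (j, i))
  | CT j => inr (inr j)
  end.

Definition coord_of_repr s : Defs.coord m kappa tau n :=
  match s with
  | inl (inl (j, k)) => CA j k
  | inl (inr (j, t)) => CB j t
  | inr (inl (j, i)) => CG j i
  | inr (inr j) => CT j
  end.

Lemma coord_reprK : cancel coord_repr coord_of_repr. Proof. by case. Qed.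

Lemma coord_of_reprK : cancel coord_of_repr coord_repr.
Proof. by case=> [[[]|[]]|[[]|]]. Qed.

HB.instance Definition _ := Finite.copy (Defs.coord m kappa tau n) (can_type coord_reprK).

Lemma sum_coord (V : nmodType) (F : Defs.coord m kappa tau n -> V) :
  \sum_z F z = \sum_j \sum_k F (CA j k) + \sum_j \sum_t F (CB j t)
             + \sum_j \sum_i F (CG j i) + \sum_j F (CT j).
Proof.
rewrite (reindex coord_of_repr); last by exists coord_repr => s _;
  [exact: coord_of_reprK | exact: coord_reprK].
rewrite !big_sumType /= addrA; congr (_ + _ + _ + _);
  by rewrite pair_bigA; apply: eq_bigr => -[].
Qed.

End CoordFinite.

Section Problem.
Variables (R : realFieldType) (n m kappa tau : nat).
Variables (A : 'I_kappa -> 'M[R]_(m, n)) (b : 'I_kappa -> 'rV[R]_n)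
          (c : 'I_kappa -> 'rV[R]_m) (d : 'rV[R]_kappa)
          (E : 'M[R]_(tau, n)) (f : 'cV[R]_tau)
          (kh : 'I_kappa) (jh : 'I_m.+1).

Local Notation pv := (pivec R n m kappa tau).

Lemma Phi_linear (x y : pv) a i j :
  Phi A b E (fun z => x z + a * y z) i j = Phi A b E x i j + a * Phi A b E y i j.
Proof.
rewrite /Phi /al /be mulrDr !mulr_sumr addrACA -!big_split /=.
by congr (_ + _); apply: eq_bigr => ? _; ring.
Qed.

Lemma Psi_linear (x y : pv) a j :
  Psi c d f (fun z => x z + a * y z) j = Psi c d f x j + a * Psi c d f y j.
Proof.
rewrite /Psi /al /be mulrDr !mulr_sumr addrACA -!big_split /=.
by congr (_ + _); apply: eq_bigr => ? _; ring.
Qed.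

Definition constraint (p : pv) (q : option ('I_n * 'I_m + 'I_m)) : R :=
  match q with
  | Some (inl (i, j)) => Phi A b E p i j + ga p (jM j) i - ga p ord0 i
  | Some (inr j) => Psi c d f p j + th p (jM j) - th p ord0
  | None => al p jh kh
  end.

Definition constraint_rhs (q : option ('I_n * 'I_m + 'I_m)) : R :=
  if q is None then 1 else 0.

Lemma constraint_linear (x y : pv) a q :
  constraint (fun z => x z + a * y z) q = constraint x q + a * constraint y q.
Proof. by case: q => [[[i j]|j]|] /=; rewrite ?Phi_linear ?Psi_linear /al /ga /th; ring. Qed.

Lemma inCkjE p : inCkj A b c d E f kh jh p <-> polyhedron constraint constraint_rhs p.
Proof.
split=> [[[p_ge0 [Phi_eq Psi_eq]] p_hat] | [p_ge0 p_eq]]; first by split=> // [[[[]|]|]].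
split; last exact: p_eq None.
do 2!split=> //.
- by move=> i j; exact: p_eq (Some (inl (i, j))).
- by move=> j; exact: p_eq (Some (inr j)).
Qed.

Definition block_constant (p : pv) : Prop :=
  [/\ forall j k, al p j k = 0, forall j t, be p j t = be p ord0 t,
      forall j i, ga p j i = ga p ord0 i & forall j, th p j = th p ord0].

Lemma constraint_block_constant p : block_constant p -> forall q, constraint p q = 0.
Proof.
case=> al0 beE gaE thE [[[i j]|j]|] /=; last exact: al0.
  rewrite gaE addrK /Phi !big1 ?addr0 // => [t|k] _.
    by rewrite beE subrr mulr0.
  by rewrite !al0 !mulr0 subrr.
rewrite thE addrK /Psi !big1 ?addr0 // => [t|k] _.
  by rewrite beE subrr mulr0.
by rewrite !al0 !mulr0 addr0.
Qed.

Definition beta_dir (t : 'I_tau) : pv := fun z => if z is CB _ t' then (t' == t)%:R else 0.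
Definition gamma_dir (i : 'I_n) : pv := fun z => if z is CG _ i' then (i' == i)%:R else 0.
Definition theta_dir : pv := fun z => if z is CT _ then 1 else 0.

Lemma beta_dir_block_constant t : block_constant (beta_dir t). Proof. by []. Qed.
Lemma gamma_dir_block_constant i : block_constant (gamma_dir i). Proof. by []. Qed.
Lemma theta_dir_block_constant : block_constant theta_dir. Proof. by []. Qed.

Section ExtremePoint.
Variable pb : pv.
Hypothesis pb_extreme : extreme_point (inCkj A b c d E f kh jh) pb.

Let pb_poly : extreme_point (polyhedron constraint constraint_rhs) pb :=
  extreme_point_equiv inCkjE pb_extreme.

Lemma pb_ge0 z : 0 <= pb z.
Proof. by case: pb_poly => -[]. Qed.

Lemma al_hat : al pb jh kh = 1.
Proof. by case: pb_poly => -[_ /(_ None)]. Qed.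

Lemma ga_jM i j : ga pb (jM j) i = ga pb ord0 i - Phi A b E pb i j.
Proof. by case: pb_poly => -[_ /(_ (Some (inl (i, j)))) /=]; lra. Qed.

Lemma th_jM j : th pb (jM j) = th pb ord0 - Psi c d f pb j.
Proof. by case: pb_poly => -[_ /(_ (Some (inr j))) /=]; lra. Qed.

Lemma block_constant_direction0 dl : block_constant dl ->
  (forall z, pb z = 0 -> dl z = 0) -> forall z, dl z = 0.
Proof.
move=> dl_const dl_supp.
apply: (extreme_point_no_direction constraint_linear pb_poly dl_supp).
exact: constraint_block_constant.
Qed.

Lemma bigcap_beta_support : \bigcap_(j < m.+1) [set t | 0 < be pb j t] = set0.
Proof.
apply/setP => t; rewrite in_set0; apply/negP => /bigcapP t_supp.
suff : beta_dir t (CB ord0 t) = 0 by rewrite /= eqxx => /eqP; rewrite oner_eq0.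
apply: (block_constant_direction0 (beta_dir_block_constant t)).
case=> // j t'; rewrite /beta_dir; case: eqP => // -> pb0.
by have := t_supp j isT; rewrite inE /be pb0 ltxx.
Qed.

Lemma ga_bigmax i : ga pb ord0 i = \big[Num.max/0]_(j < m) pos_part (Phi A b E pb i j).
Proof.
apply: (column_bigmax_pos_part (g := fun j => ga pb j i)) => [j|j|ga_pos].
- exact: ga_jM.
- exact: pb_ge0.
suff : gamma_dir i (CG ord0 i) = 0 by rewrite /= eqxx => /eqP; rewrite oner_eq0.
apply: (block_constant_direction0 (gamma_dir_block_constant i)).
case=> // j i'; rewrite /gamma_dir; case: eqP => // -> pb0.
by have := ga_pos j; rewrite /ga pb0 ltxx.
Qed.

Lemma th_bigmax : th pb ord0 = \big[Num.max/0]_(j < m) pos_part (Psi c d f pb j).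
Proof.
apply: (column_bigmax_pos_part (g := fun j => th pb j)) => [j|j|th_pos].
- exact: th_jM.
- exact: pb_ge0.
suff : theta_dir (CT ord0) = 0 by move=> /eqP; rewrite oner_eq0.
apply: (block_constant_direction0 theta_dir_block_constant).
by case=> // j pb0; have := th_pos j; rewrite /th pb0 ltxx.
Qed.

Lemma card_alpha_support j :
  #|[set k | al pb j k != 0]|
  = (#|[set k | (0 < al pb j k)%R && ((j != jh) || (k != kh))]| + (j == jh))%N.
Proof.
have al_pos j' k : (0 < al pb j' k) = (al pb j' k != 0) by rewrite lt0r pb_ge0 andbT.
have [->|ne_j] := eqVneq j jh; last first.
  by rewrite addn0; apply: eq_card => k; rewrite !inE /= andbT al_pos.
rewrite (cardsD1 kh) inE al_hat oner_eq0 addnC; congr (_ + _)%N.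
by apply: eq_card => k; rewrite !inE al_pos andbC.
Qed.

Lemma support_bound :
  \sum_(j < m.+1) (#|[set k | (0 < al pb j k) && ((j != jh) || (k != kh))]|
                   + #|[set t | 0 < be pb j t]|)%:Z
  + \sum_i Ind (ga pb ord0 i) + \sum_(j < m) \sum_i Ind (ga pb (jM j) i)
  + Ind (th pb ord0) + \sum_(j < m) Ind (th pb (jM j)) <= (n * m + m)%:Z.
Proof.
have := extreme_point_support_card constraint_linear pb_poly.
rewrite card_option card_sum card_prod !card_ord -lez_nat -sum_Ind sum_coord => supp_le.
have alpha : \sum_j \sum_k Ind (pb (CA j k))
    = \sum_(j < m.+1) #|[set k | (0 < al pb j k) && ((j != jh) || (k != kh))]|%:Z + 1.
  under eq_bigr do rewrite sum_Ind card_alpha_support PoszD.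
  rewrite big_split /=; congr (_ + _).
  by rewrite (bigD1 jh) //= eqxx big1 ?addr0 // => j /negbTE ->.
have beta : \sum_j \sum_t Ind (pb (CB j t)) = \sum_(j < m.+1) #|[set t | 0 < be pb j t]|%:Z.
  apply: eq_bigr => j _; rewrite sum_Ind; congr Posz; apply: eq_card => t.
  by rewrite !inE lt0r pb_ge0 andbT.
have gamma : \sum_j \sum_i Ind (pb (CG j i))
    = \sum_i Ind (ga pb ord0 i) + \sum_(j < m) \sum_i Ind (ga pb (jM j) i).
  exact: big_ord_recl.
have theta : \sum_j Ind (pb (CT j)) = Ind (th pb ord0) + \sum_(j < m) Ind (th pb (jM j)).
  exact: big_ord_recl.
rewrite alpha beta gamma theta -[(n * m + m).+1]addn1 !PoszD in supp_le.
under eq_bigr do rewrite PoszD.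
rewrite big_split /= !PoszD; lra.
Qed.

Lemma tight_constraints_count :
  exists (U1 : {set 'I_n * 'I_m}) (U2 : {set 'I_m}),
    U1 \subset [set ij | Phi A b E pb ij.1 ij.2 == 0]
    /\ U2 \subset [set j | Psi c d f pb j == 0]
    /\ \sum_(j < m.+1) (#|[set k | (0 < al pb j k) && ((j != jh) || (k != kh))]|
                         + #|[set t | 0 < be pb j t]|)%:Z
        + \sum_(i < n) Ind (ga pb ord0 i)
        - \sum_(i < n) \sum_(j < m) Ind (ga pb ord0 i) * (1 - Ind (ga pb (jM j) i))
        + Ind (th pb ord0)
        - \sum_(j < m) Ind (th pb ord0) * (1 - Ind (th pb (jM j)))
        <= (#|U1| + #|U2|)%:Z.
Proof.
pose U1 : {set 'I_n * 'I_m} :=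
  [set ij | (ga pb ord0 ij.1 == 0) && (ga pb (jM ij.2) ij.1 == 0)].
pose U2 : {set 'I_m} := [set j | (th pb ord0 == 0) && (th pb (jM j) == 0)].
have cardU1 : #|U1|%:Z = (n * m)%:Z - \sum_i \sum_j Ind (ga pb (jM j) i)
    - \sum_i \sum_j Ind (ga pb ord0 i) * (1 - Ind (ga pb (jM j) i)).
  rewrite (card_both_zero (fun ij : 'I_n * 'I_m => ga pb ord0 ij.1)
                          (fun ij => ga pb (jM ij.2) ij.1)).
  by rewrite card_prod !card_ord !pair_bigA.
have cardU2 : #|U2|%:Z = m%:Z - \sum_j Ind (th pb (jM j))
    - \sum_j Ind (th pb ord0) * (1 - Ind (th pb (jM j))).
  by rewrite (card_both_zero (fun _ : 'I_m => th pb ord0) (fun j => th pb (jM j))) card_ord.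
exists U1, U2; split; [|split].
- apply/subsetP => -[i j]; rewrite !inE /= => /andP [/eqP ga0 /eqP gaj].
  by have := ga_jM i j; rewrite ga0 gaj => ?; apply/eqP; lra.
- apply/subsetP => j; rewrite !inE => /andP [/eqP th0 /eqP thj].
  by have := th_jM j; rewrite th0 thj => ?; apply/eqP; lra.
have := support_bound; rewrite exchange_big /= PoszD => supp_le.
by rewrite PoszD cardU1 cardU2; lra.
Qed.

End ExtremePoint.

Lemma inCkj_of_columns pb :
  (forall j k, 0 <= al pb j k) -> (forall j t, 0 <= be pb j t) -> al pb jh kh = 1 ->
  (forall i, ga pb ord0 i = \big[Num.max/0]_(j < m) pos_part (Phi A b E pb i j)
             /\ forall j, ga pb (jM j) i = ga pb ord0 i - Phi A b E pb i j) ->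
  th pb ord0 = \big[Num.max/0]_(j < m) pos_part (Psi c d f pb j)
    /\ (forall j, th pb (jM j) = th pb ord0 - Psi c d f pb j) ->
  inCkj A b c d E f kh jh pb.
Proof.
move=> al_ge0 be_ge0 al1 ga_col [th0E thE].
apply/inCkjE; split=> [[j k|j t|j i|j]|[[[i j]|j]|]] /=.
- exact: al_ge0.
- exact: be_ge0.
- have [ga0E gaE] := ga_col i.
  exact: (column_ge0 (g := fun j => ga pb j i) gaE ga0E).
- exact: (column_ge0 (g := th pb) thE th0E).
- by have [_ ->] := ga_col i; ring.
- by rewrite thE; ring.
- exact: al1.
Qed.

End Problem.

Theorem mainTheorem5 (R : realFieldType) (n m kappa tau : nat)
    (A : 'I_kappa -> 'M[R]_(m, n)) (b : 'I_kappa -> 'rV[R]_n)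
    (c : 'I_kappa -> 'rV[R]_m) (d : 'rV[R]_kappa)
    (E : 'M[R]_(tau, n)) (f : 'cV[R]_tau)
    (kh : 'I_kappa) (jh : 'I_m.+1) :
  (forall pb : pivec R n m kappa tau,
     extreme_point (inCkj A b c d E f kh jh) pb ->
     let Kset (j : 'I_m.+1) : {set 'I_kappa} :=
       [set k | (0 < al pb j k) && ((j != jh) || (k != kh))] in
     let Tset (j : 'I_m.+1) : {set 'I_tau} := [set t | 0 < be pb j t] in
     (\bigcap_(j < m.+1) Tset j = set0)
     /\ (forall i : 'I_n,
           ga pb ord0 i = \big[Num.max/0]_(j < m) pos_part (Phi A b E pb i j)
           /\ forall j : 'I_m, ga pb (jM j) i = ga pb ord0 i - Phi A b E pb i j)
     /\ (th pb ord0 = \big[Num.max/0]_(j < m) pos_part (Psi c d f pb j)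
         /\ forall j : 'I_m, th pb (jM j) = th pb ord0 - Psi c d f pb j)
     /\ (exists (U1 : {set 'I_n * 'I_m}) (U2 : {set 'I_m}),
           U1 \subset [set ij | Phi A b E pb ij.1 ij.2 == 0]
           /\ U2 \subset [set j | Psi c d f pb j == 0]
           /\ ((\sum_(j < m.+1) (#|Kset j| + #|Tset j|)%:Z)
               + (\sum_(i < n) Ind (ga pb ord0 i))
               - (\sum_(i < n) \sum_(j < m)
                    Ind (ga pb ord0 i) * (1 - Ind (ga pb (jM j) i)))
               + Ind (th pb ord0)
               - (\sum_(j < m) Ind (th pb ord0) * (1 - Ind (th pb (jM j))))
               <= (#|U1| + #|U2|)%:Z)%R))
  /\
  (forall pb : pivec R n m kappa tau,
     (forall j k, 0 <= al pb j k) ->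
     (forall j t, 0 <= be pb j t) ->
     al pb jh kh = 1 ->
     (forall i : 'I_n,
        ga pb ord0 i = \big[Num.max/0]_(j < m) pos_part (Phi A b E pb i j)
        /\ forall j : 'I_m, ga pb (jM j) i = ga pb ord0 i - Phi A b E pb i j) ->
     (th pb ord0 = \big[Num.max/0]_(j < m) pos_part (Psi c d f pb j)
      /\ forall j : 'I_m, th pb (jM j) = th pb ord0 - Psi c d f pb j) ->
     inCkj A b c d E f kh jh pb).
Proof.
split=> [pb pb_extreme Kset Tset | pb]; last exact: inCkj_of_columns.
split; first exact: bigcap_beta_support pb_extreme.
split; first by move=> i; split; [exact: ga_bigmax pb_extreme i | exact: ga_jM pb_extreme i].
split; first by split; [exact: th_bigmax pb_extreme | exact: th_jM pb_extreme].
exact: tight_constraints_count pb_extreme.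
Qed.
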